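(* Let $a>0$ and $\phi_a(x)=e^{-ax^2}$. There is a constant $C>0$ (depending only on $a$) such that every $f=\sum_{k\in\mathbb{Z}}c_k\phi_a(\cdot-k)$ with $c\in\ell^\infty(\mathbb{Z})$ possesses an extension to an entire function satisfying $|f(x+iy)|\le C\|c\|_\infty e^{ay^2}$ for all $x,y\in\mathbb{R}$. *)

From Stdlib Require Import Reals ZArith.
From Coquelicot Require Import Coquelicot.
Open Scope R_scope.

Definition phi (a x : R) : R := exp (- a * x ^ 2).

Definition linf_bounded (c : Z -> C) : Prop :=
  exists M : R, forall k : Z, Cmod (c k) <= M.

Definition linf_norm (c : Z -> C) : R :=
  real (Lub_Rbar (fun r => exists k : Z, r = Cmod (c k))).

(* symmetric partial sum  sum_{k=-N}^{N} c_k phi_a(x - k) *)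
Definition gauss_partial (a : R) (c : Z -> C) (x : R) (N : nat) : C :=
  sum_n_m (G := C_AbelianMonoid)
    (fun j : nat =>
       let k := (Z.of_nat j - Z.of_nat N)%Z in
       Cmult (c k) (RtoC (phi a (x - IZR k)))) 0 (2 * N).

(* f(x) = sum_{k in Z} c_k phi_a(x - k) has value v at x (the series converges
   absolutely for bounded c, so symmetric partial sums determine its value) *)
Definition gauss_series_value (a : R) (c : Z -> C) (x : R) (v : C) : Prop :=
  filterlim (gauss_partial a c x) eventually (locally v).

Definition entire (F : C -> C) : Prop :=
  forall z : C, ex_derive (K := C_AbsRing) (V := C_NormedModule) F z.

From Stdlib Require Import Reals ZArith Lra Lia.
From Coquelicot Require Import Coquelicot.
Open Scope R_scope.

(* For each k, z |-> exp (- a (z - k)^2) is entire and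
   |exp (- a (x + i y - k)^2)| = exp (a y^2) exp (- a (x - k)^2).
   Near any point z the terms, their derivatives and their second-order Taylor remainders
   are all dominated by multiples of exp (- a |k|), so the series (summed symmetrically over Z)
   converges to an entire function whose derivative is the termwise derivative.
   The growth bound holds because the sum over k of exp (- a (x - k)^2) is bounded
   uniformly in x, by comparison with a two-sided geometric series centred at an integer
   next to x. *)

Lemma exp_le_exp x y : x <= y -> exp x <= exp y.
Proof. intros [H | ->]; [left; apply exp_increasing, H | right; reflexivity]. Qed.

Lemma exp_neg_lt_1 a : 0 < a -> exp (- a) < 1.
Proof. intros Ha. rewrite <- exp_0. apply exp_increasing. lra. Qed.

Lemma exp_sub_1_bounds x : x <= exp x - 1 <= x * exp x.
Proof.
  pose proof (exp_ineq1_le x). pose proof (exp_ineq1_le (- x)).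
  assert (exp x * exp (- x) = 1) by (rewrite <- exp_plus, Rplus_opp_r; apply exp_0).
  pose proof (exp_pos x). split; nra.
Qed.

Lemma Rabs_exp_sub_1_le x : Rabs (exp x - 1) <= Rabs x * exp (Rabs x).
Proof.
  destruct (exp_sub_1_bounds x). pose proof (exp_pos x).
  destruct (Rle_or_lt 0 x).
  - rewrite (Rabs_pos_eq x), Rabs_pos_eq by lra. lra.
  - rewrite Rabs_left, (Rabs_left x) by nra.
    assert (1 <= exp (- x)) by (rewrite <- exp_0; apply exp_le_exp; lra).
    nra.
Qed.

Lemma Rabs_exp_sub_1_sub_le x : Rabs (exp x - 1 - x) <= x ^ 2 * exp (Rabs x).
Proof.
  destruct (exp_sub_1_bounds x).
  (* [0 <= e^x - 1 - x <= x (e^x - 1) <= |x| |e^x - 1|] *)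
  assert (x * (exp x - 1) <= Rabs x * Rabs (exp x - 1)) by (rewrite <- Rabs_mult; apply Rle_abs).
  pose proof (Rabs_exp_sub_1_le x).
  rewrite Rabs_pos_eq by lra.
  rewrite <- (pow2_abs x).
  pose proof (Rabs_pos x). nra.
Qed.

Lemma Rabs_sin_le y : Rabs (sin y) <= Rabs y.
Proof.
  assert (Hpos : forall t, 0 <= t -> Rabs (sin t) <= t).
  { intros t Ht.
    assert (sin t <= t)
      by (destruct Ht as [Ht | <-]; [left; apply sin_lt_x, Ht | rewrite sin_0; lra]).
    destruct (Rle_or_lt 1 t).
    - pose proof (SIN_bound t). unfold Rabs; destruct Rcase_abs; lra.
    - assert (0 <= sin t) by (apply sin_ge_0; pose proof PI2_1; lra).
      rewrite Rabs_pos_eq; lra. }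
  destruct (Rle_or_lt 0 y).
  - rewrite (Rabs_pos_eq y) by lra. auto.
  - rewrite <- (Ropp_involutive y), sin_neg, !Rabs_Ropp, (Rabs_left y) by lra. apply Hpos; lra.
Qed.

Lemma Rabs_cos_sub_1_le y : Rabs (cos y - 1) <= y ^ 2 / 2.
Proof.
  (* [cos y - 1 = - 2 sin (y/2)^2] *)
  replace y with (2 * (y / 2)) at 1 by field.
  rewrite cos_2a_sin.
  replace (1 - 2 * sin (y / 2) * sin (y / 2) - 1) with (- (2 * sin (y / 2) ^ 2)) by ring.
  rewrite Rabs_Ropp, Rabs_pos_eq by nra.
  replace (y ^ 2 / 2) with (2 * (y / 2) ^ 2) by field.
  rewrite <- (pow2_abs (sin (y / 2))), <- (pow2_abs (y / 2)).
  pose proof (Rabs_sin_le (y / 2)). pose proof (Rabs_pos (sin (y / 2))). nra.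
Qed.

Lemma Rabs_sin_sub_le y : Rabs (sin y - y) <= 2 * y ^ 2.
Proof.
  assert (Hpos : forall t, 0 <= t -> Rabs (sin t - t) <= 2 * t ^ 2).
  { intros t Ht.
    pose proof (Rabs_sin_le t) as Hs. rewrite (Rabs_pos_eq t Ht) in Hs.
    destruct (Rle_or_lt 1 t).
    - pose proof (Rabs_triang (sin t) (- t)). rewrite Rabs_Ropp, (Rabs_pos_eq t) in * by lra.
      unfold Rminus. nra.
    - assert (Hlb : t - t ^ 3 / 6 <= sin t).
      { destruct (sin_bound t 0 Ht) as [Hb _]; [pose proof PI2_1; lra|].
        unfold sin_approx, sin_term in Hb. simpl in Hb. lra. }
      assert (0 <= sin t) by (apply sin_ge_0; pose proof PI2_1; lra).
      rewrite Rabs_pos_eq in Hs by lra.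
      rewrite Rabs_left1 by lra. nra. }
  destruct (Rle_or_lt 0 y); [auto|].
  rewrite <- (Ropp_involutive y), sin_neg.
  replace (- sin (- y) - - - y) with (- (sin (- y) - - y)) by ring.
  rewrite Rabs_Ropp. replace ((- - y) ^ 2) with ((- y) ^ 2) by ring. apply Hpos; lra.
Qed.

Definition cexp (z : C) : C := (exp (fst z) * cos (snd z), exp (fst z) * sin (snd z)).

Lemma cexp_add z w : cexp (z + w) = (cexp z * cexp w)%C.
Proof.
  destruct z as [x y], w as [u v]. unfold cexp, Cplus, Cmult; simpl.
  rewrite exp_plus, cos_plus, sin_plus. f_equal; ring.
Qed.

Lemma Cmod_cexp z : Cmod (cexp z) = exp (fst z).
Proof.
  destruct z as [x y]. unfold cexp, Cmod; simpl.
  replace ((exp x * cos y) * ((exp x * cos y) * 1) + (exp x * sin y) * ((exp x * sin y) * 1))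
    with (exp x ^ 2 * (Rsqr (sin y) + Rsqr (cos y))) by (unfold Rsqr; ring).
  rewrite sin2_cos2, Rmult_1_r. apply sqrt_pow2, Rlt_le, exp_pos.
Qed.

Lemma cexp_RtoC r : cexp (RtoC r) = RtoC (exp r).
Proof. unfold cexp, RtoC; simpl. rewrite cos_0, sin_0. f_equal; ring. Qed.

Lemma Cmod_pair_le x y : Cmod (x, y) <= Rabs x + Rabs y.
Proof.
  replace (x, y) with (RtoC x + (0, y))%C by (unfold RtoC, Cplus; simpl; f_equal; ring).
  eapply Rle_trans; [apply Cmod_triangle|].
  rewrite Cmod_R. unfold Cmod; simpl.
  rewrite Rmult_0_l, Rplus_0_l, Rmult_1_r, <- Rsqr_def, sqrt_Rsqr_abs. lra.
Qed.

Lemma Cmod_cexp_sub_1_sub_le w : Cmod (cexp w - 1 - w) <= 4 * Cmod w ^ 2 * exp (Cmod w).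
Proof.
  destruct w as [x y].
  replace (cexp (x, y) - 1 - (x, y))%C with (exp x * cos y - 1 - x, exp x * sin y - y)
    by (unfold cexp, Cminus, Cplus, Copp, RtoC; simpl; f_equal; ring).
  eapply Rle_trans; [apply Cmod_pair_le|].
  assert (Hw : Cmod (x, y) ^ 2 = x ^ 2 + y ^ 2) by apply Cmod2_alt.
  assert (Hx : Rabs x <= Cmod (x, y)) by exact (re_le_Cmod (x, y)).
  assert (Hy : Rabs y <= Cmod (x, y)).
  { pose proof (Rmax_Cmod (x, y)). pose proof (Rmax_r (Rabs x) (Rabs y)). simpl in *. lra. }
  pose proof (Rabs_exp_sub_1_le x). pose proof (Rabs_exp_sub_1_sub_le x).
  pose proof (Rabs_sin_le y). pose proof (Rabs_cos_sub_1_le y). pose proof (Rabs_sin_sub_le y).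
  assert (HE1 : 1 <= exp (Rabs x)) by (rewrite <- exp_0; apply exp_le_exp, Rabs_pos).
  assert (HEM : exp (Rabs x) <= exp (Cmod (x, y))) by (apply exp_le_exp, Hx).
  assert (HeE : exp x <= exp (Rabs x)) by (apply exp_le_exp, Rle_abs).
  pose proof (exp_pos x).
  set (M := Cmod (x, y)) in *. set (E := exp (Rabs x)) in *.
  assert (Hxy : Rabs x * Rabs y <= (x ^ 2 + y ^ 2) / 2).
  { rewrite <- (pow2_abs x), <- (pow2_abs y). pose proof (pow2_ge_0 (Rabs x - Rabs y)). nra. }
  assert (Hre : Rabs (exp x * cos y - 1 - x) <= E * (x ^ 2 + y ^ 2)).
  { replace (exp x * cos y - 1 - x) with ((exp x - 1 - x) + exp x * (cos y - 1)) by ring.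
    eapply Rle_trans; [apply Rabs_triang|]. rewrite Rabs_mult, (Rabs_pos_eq (exp x)) by lra.
    assert (exp x * Rabs (cos y - 1) <= E * (y ^ 2 / 2))
      by (apply Rmult_le_compat; auto using Rabs_pos; lra).
    pose proof (pow2_ge_0 y). nra. }
  assert (Him : Rabs (exp x * sin y - y) <= 3 * E * (x ^ 2 + y ^ 2)).
  { replace (exp x * sin y - y) with ((exp x - 1) * sin y + (sin y - y)) by ring.
    eapply Rle_trans; [apply Rabs_triang|]. rewrite Rabs_mult.
    assert (Rabs (exp x - 1) * Rabs (sin y) <= Rabs x * E * Rabs y)
      by (apply Rmult_le_compat; auto using Rabs_pos).
    nra. }
  rewrite Hw. pose proof (pow2_ge_0 x). pose proof (pow2_ge_0 y). nra.
Qed.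

Lemma sq_le_4_exp r : 0 <= r -> r ^ 2 <= 4 * exp r.
Proof.
  intros Hr. pose proof (exp_ineq1_le (r / 2)).
  assert (exp r = exp (r / 2) * exp (r / 2)) by (rewrite <- exp_plus; f_equal; field).
  nra.
Qed.

Lemma Cmod_cexp_sub_1_sub_le_of_le w t r :
  0 <= t <= 1 -> 0 <= r -> Cmod w <= t * r ->
  Cmod (cexp w - 1 - w) <= 16 * t ^ 2 * exp (2 * r).
Proof.
  intros Ht Hr Hw.
  eapply Rle_trans; [apply Cmod_cexp_sub_1_sub_le|].
  pose proof (Cmod_ge_0 w).
  assert (Hw2 : Cmod w ^ 2 <= t ^ 2 * r ^ 2)
    by (rewrite <- Rpow_mult_distr; apply pow_incr; lra).
  assert (Hew : exp (Cmod w) <= exp r) by (apply exp_le_exp; nra).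
  pose proof (sq_le_4_exp r Hr). pose proof (pow2_ge_0 t). pose proof (exp_pos r).
  assert (exp (2 * r) = exp r * exp r) by (rewrite <- exp_plus; f_equal; ring).
  assert (Cmod w ^ 2 * exp (Cmod w) <= t ^ 2 * (4 * exp r) * exp r).
  { apply Rmult_le_compat; [apply pow2_ge_0 | apply Rlt_le, exp_pos | | exact Hew].
    apply (Rle_trans _ (t ^ 2 * r ^ 2)); [exact Hw2 | apply Rmult_le_compat_l; lra]. }
  nra.
Qed.

Lemma norm_le_of_lim {K : AbsRing} {V : NormedModule K}
    (u : nat -> V) (v : nat -> R) (l : V) (m : R) :
  filterlim u eventually (locally l) -> is_lim_seq v m ->
  (forall n, norm (u n) <= v n) -> norm l <= m.
Proof.
  intros Hu Hv Hle.
  exact (is_lim_seq_le (fun n => norm (u n)) v (norm l) m Hle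
           (filterlim_comp _ _ _ u norm _ _ _ Hu (filterlim_norm l)) Hv).
Qed.

Lemma is_derive_of_quadratic_remainder {K : AbsRing} {V : NormedModule K}
    (f : K -> V) (z : K) (l : V) (M : R) :
  (forall h : K, abs h <= 1 ->
     norm (minus (minus (f (plus z h)) (f z)) (scal h l)) <= M * abs h ^ 2) ->
  is_derive f z l.
Proof.
  intros Hrem. split; [apply is_linear_scal_l|].
  intros x Hx.
  apply (is_filter_lim_locally_unique (V := AbsRing_NormedModule K)) in Hx. subst x.
  intros eps.
  set (Mp := Rabs M + 1).
  assert (HMp : 0 < Mp) by (unfold Mp; pose proof (Rabs_pos M); lra).
  assert (Hd : 0 < Rmin 1 (eps / Mp))
    by (apply Rmin_pos; [lra | apply Rdiv_lt_0_compat; [apply cond_pos | exact HMp]]).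
  exists (mkposreal _ Hd). intros y Hy. change (abs (minus y z) < Rmin 1 (eps / Mp)) in Hy.
  assert (Hyz : plus z (minus y z) = y).
  { unfold minus.
    rewrite plus_comm, <- plus_assoc, (plus_opp_l (G := K)), plus_zero_r. reflexivity. }
  pose proof (Hrem (minus y z)) as Hr. rewrite Hyz in Hr.
  change (norm (minus y z)) with (abs (minus y z)).
  set (t := abs (minus y z)) in *.
  assert (Ht1 : t <= 1) by (pose proof (Rmin_l 1 (eps / Mp)); lra).
  assert (Hte : Mp * t <= eps).
  { assert (t <= eps / Mp) by (pose proof (Rmin_r 1 (eps / Mp)); lra).
    apply (Rmult_le_reg_r (/ Mp)); [apply Rinv_0_lt_compat, HMp|]. field_simplify; lra. }
  assert (M <= Mp) by (unfold Mp; pose proof (Rle_abs M); lra).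
  assert (0 <= t) by apply abs_ge_0.
  eapply Rle_trans; [apply Hr, Ht1|]. simpl. nra.
Qed.

Definition sym_term {G : AbelianMonoid} (t : Z -> G) (n : nat) : G :=
  match n with O => t 0%Z | S _ => plus (t (Z.of_nat n)) (t (- Z.of_nat n)%Z) end.

Lemma sum_centered_window {G : AbelianMonoid} (t : Z -> G) (N : nat) :
  sum_n_m (fun j : nat => t (Z.of_nat j - Z.of_nat N)%Z) 0 (2 * N) = sum_n (sym_term t) N.
Proof.
  induction N as [|N IH].
  - unfold sum_n. rewrite !sum_n_n. reflexivity.
  - replace (2 * S N)%nat with (S (S (2 * N))) by lia.
    rewrite sum_Sn, sum_Sn_m, sum_n_Sm, <- sum_n_m_S by lia.
    rewrite (sum_n_m_ext _ (fun j : nat => t (Z.of_nat j - Z.of_nat N)%Z))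
      by (intros j; f_equal; lia).
    rewrite IH. simpl sym_term.
    replace (Z.of_nat 0 - Z.of_nat (S N))%Z with (- Z.of_nat (S N))%Z by lia.
    replace (Z.of_nat (S (S (2 * N))) - Z.of_nat (S N))%Z with (Z.of_nat (S N)) by lia.
    rewrite (plus_comm (t (- Z.of_nat (S N))%Z)), <- !plus_assoc. reflexivity.
Qed.

Definition Csum (u : nat -> C) : C := iota (T := C_CompleteNormedModule) (is_series u).

Lemma is_series_Csum (u : nat -> C) : ex_series u -> is_series u (Csum u).
Proof.
  intros [l Hl].
  replace (Csum u) with l; [exact Hl|].
  symmetry. exact (iota_filterlim_locally (V := C_CompleteNormedModule) (F := eventually) _ l Hl).
Qed.

Lemma exp_mult_INR n x : exp (INR n * x) = exp x ^ n.
Proof.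
  induction n as [|n IH].
  - rewrite Rmult_0_l. apply exp_0.
  - rewrite S_INR, Rmult_plus_distr_r, Rmult_1_l, exp_plus, IH. simpl. ring.
Qed.

Section Laplace_dominated_series.

Variables (a B : R) (t : Z -> C).
Hypothesis ha : 0 < a.
Hypothesis Ht : forall k : Z, Cmod (t k) <= B * exp (- a * Rabs (IZR k)).

Lemma Cmod_sym_term_le n : Cmod (sym_term t n) <= 2 * B * exp (- a) ^ n.
Proof.
  assert (Hn : forall k : Z, Rabs (IZR k) = INR n -> Cmod (t k) <= B * exp (- a) ^ n).
  { intros k Hk. rewrite <- exp_mult_INR, <- Hk, (Rmult_comm _ (- a)). apply Ht. }
  destruct n as [|n].
  - pose proof (Hn 0%Z Rabs_R0). simpl in *. pose proof (Cmod_ge_0 (t 0%Z)). lra.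
  - unfold sym_term. change (@plus C_AbelianMonoid) with Cplus.
    eapply Rle_trans; [apply Cmod_triangle|].
    assert (Hpos : Rabs (IZR (Z.of_nat (S n))) = INR (S n))
      by (rewrite <- INR_IZR_INZ; apply Rabs_pos_eq, pos_INR).
    assert (Hneg : Rabs (IZR (- Z.of_nat (S n))) = INR (S n))
      by (rewrite opp_IZR, Rabs_Ropp; exact Hpos).
    pose proof (Hn _ Hpos). pose proof (Hn _ Hneg). lra.
Qed.

Lemma is_series_laplace_majorant :
  is_series (fun n => 2 * B * exp (- a) ^ n) (2 * B / (1 - exp (- a))).
Proof.
  assert (Hq : Rabs (exp (- a)) < 1)
    by (rewrite Rabs_pos_eq by apply Rlt_le, exp_pos; apply exp_neg_lt_1, ha).
  exact (is_series_scal_l (K := R_AbsRing) (2 * B) _ _ (is_series_geom _ Hq)).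
Qed.

Lemma ex_series_sym_term : ex_series (sym_term t).
Proof.
  apply (ex_series_le (V := C_CompleteNormedModule) _ _ Cmod_sym_term_le).
  eexists. apply is_series_laplace_majorant.
Qed.

Lemma Cmod_le_of_is_series_sym_term l :
  is_series (sym_term t) l -> Cmod l <= 2 * B / (1 - exp (- a)).
Proof.
  intros Hl.
  apply (norm_le_of_lim (V := C_NormedModule) _ _ _ _ Hl is_series_laplace_majorant).
  intros N. eapply Rle_trans; [apply (norm_sum_n_m (V := C_NormedModule))|].
  apply sum_n_m_le. exact Cmod_sym_term_le.
Qed.

End Laplace_dominated_series.

(* [laplace_tail a s] is the closed form of [sum_(k >= s) exp (- a |k|)]. *)
Definition laplace_tail (a : R) (s : Z) : R :=
  (if Z_le_dec 0 s then exp (- a * IZR s)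
   else 1 + exp (- a) - exp (- a) * exp (a * IZR s)) / (1 - exp (- a)).

Section Laplace_tail.

Variable a : R.
Hypothesis ha : 0 < a.

Lemma laplace_tail_step s :
  laplace_tail a s = exp (- a * Rabs (IZR s)) + laplace_tail a (s + 1).
Proof.
  pose proof (exp_neg_lt_1 a ha). unfold laplace_tail. rewrite plus_IZR.
  destruct (Z_le_dec 0 s) as [H1|H1]; destruct (Z_le_dec 0 (s + 1)) as [H2|H2]; try lia.
  - rewrite Rabs_pos_eq by (apply IZR_le; lia).
    replace (- a * (IZR s + 1)) with (- a * IZR s + - a) by ring. rewrite exp_plus.
    field. lra.
  - assert (s = -1)%Z by lia. subst s.
    replace (- a * Rabs (IZR (-1))) with (- a) by (rewrite Rabs_left by lra; simpl; ring).
    replace (IZR (-1) + 1) with 0 by (simpl; ring). rewrite Rmult_0_r, exp_0.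
    replace (a * IZR (-1)) with (- a) by (simpl; ring).
    field. lra.
  - assert (IZR s < 0) by (apply IZR_lt; lia).
    rewrite Rabs_left by lra.
    replace (a * (IZR s + 1)) with (a * IZR s + a) by ring.
    replace (- a * - IZR s) with (a * IZR s) by ring.
    assert (Hea : exp (- a) * exp a = 1) by (rewrite <- exp_plus, Rplus_opp_l; apply exp_0).
    rewrite exp_plus.
    replace (exp (- a) * (exp (a * IZR s) * exp a)) with (exp (a * IZR s))
      by (rewrite <- (Rmult_1_r (exp (a * IZR s))) at 1; rewrite <- Hea; ring).
    field. lra.
Qed.

Lemma laplace_tail_bounds s :
  0 <= laplace_tail a s <= (1 + exp (- a)) / (1 - exp (- a)).
Proof.
  pose proof (exp_neg_lt_1 a ha). pose proof (exp_pos (- a)).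
  assert (Hinv : 0 < / (1 - exp (- a))) by (apply Rinv_0_lt_compat; lra).
  unfold laplace_tail, Rdiv. destruct (Z_le_dec 0 s) as [Hs|Hs].
  - assert (exp (- a * IZR s) <= 1).
    { rewrite <- exp_0. apply exp_le_exp. assert (0 <= IZR s) by (apply IZR_le; lia). nra. }
    pose proof (exp_pos (- a * IZR s)). split; nra.
  - assert (exp (a * IZR s) <= 1).
    { rewrite <- exp_0. apply exp_le_exp. assert (IZR s <= 0) by (apply IZR_le; lia). nra. }
    pose proof (exp_pos (a * IZR s)).
    assert (0 <= exp (- a) * exp (a * IZR s) <= exp (- a)) by (split; nra).
    split; nra.
Qed.

Lemma sum_window_laplace_le M s :
  sum_n_m (fun j : nat => exp (- a * Rabs (IZR (Z.of_nat j + s)))) 0 M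
  <= (1 + exp (- a)) / (1 - exp (- a)).
Proof.
  enough (Hw : forall s, sum_n_m (fun j : nat => exp (- a * Rabs (IZR (Z.of_nat j + s)))) 0 M
                         <= laplace_tail a s)
    by (eapply Rle_trans; [apply Hw | apply laplace_tail_bounds]).
  induction M as [|M IH]; intros s'.
  - rewrite sum_n_n, (laplace_tail_step s'). pose proof (laplace_tail_bounds (s' + 1)).
    simpl. lra.
  - rewrite sum_Sn_m, <- sum_n_m_S by lia.
    rewrite (sum_n_m_ext _ (fun j : nat => exp (- a * Rabs (IZR (Z.of_nat j + (s' + 1))))))
      by (intros j; do 4 f_equal; lia).
    rewrite (laplace_tail_step s'). pose proof (IH (s' + 1)%Z).
    change (@plus R_AbelianMonoid) with Rplus. simpl. lra.
Qed.

End Laplace_tail.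

Section Gaussian.

Variable a : R.
Hypothesis ha : 0 < a.

Definition gauss_exponent (k : Z) (z : C) : C := (RtoC (- a) * ((z - IZR k) * (z - IZR k)))%C.

Definition gauss (k : Z) (z : C) : C := cexp (gauss_exponent k z).

Definition gauss_deriv (k : Z) (z : C) : C := (RtoC (- a) * (RtoC 2 * (z - IZR k)) * gauss k z)%C.

Lemma Cmod_gauss k x y : Cmod (gauss k (x, y)) = exp (- a * ((x - IZR k) ^ 2 - y ^ 2)).
Proof.
  unfold gauss. rewrite Cmod_cexp. f_equal.
  unfold gauss_exponent, RtoC, Cminus, Cplus, Copp, Cmult; simpl. ring.
Qed.

Lemma gauss_RtoC k x : gauss k (RtoC x) = RtoC (phi a (x - IZR k)).
Proof.
  unfold gauss, phi. rewrite <- cexp_RtoC. f_equal.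
  unfold gauss_exponent, RtoC, Cminus, Cplus, Copp, Cmult; simpl. f_equal; ring.
Qed.

Definition gauss_envelope (z : C) : R :=
  exp (a * snd z ^ 2 + 4 * a * Rabs (snd z) + 9 * a + a * Rabs (fst z)).

(* The factor [exp (2 r)], [r = 2 a |z - k| + a], absorbs the polynomial factors in [z - k]
   of the derivative and of the Taylor remainder of [gauss k] at [z]. *)
Lemma Cmod_gauss_mul_exp_le k z :
  Cmod (gauss k z) * exp (2 * (2 * a * Cmod (z - IZR k) + a))
  <= gauss_envelope z * exp (- a * Rabs (IZR k)).
Proof.
  destruct z as [x y]. rewrite Cmod_gauss. unfold gauss_envelope; simpl fst; simpl snd.
  rewrite <- !exp_plus. apply exp_le_exp.
  assert (Hm : Cmod ((x, y) - IZR k) <= Rabs (x - IZR k) + Rabs y).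
  { replace ((x, y) - IZR k)%C with (x - IZR k, y)
      by (unfold RtoC, Cminus, Cplus, Copp; simpl; f_equal; ring).
    apply Cmod_pair_le. }
  set (s := Rabs (x - IZR k)) in *.
  assert (Hs : (x - IZR k) ^ 2 = s ^ 2) by (unfold s; rewrite pow2_abs; reflexivity).
  assert (Hk : Rabs (IZR k) <= Rabs x + s).
  { unfold s. replace (IZR k) with (x - (x - IZR k)) at 1 by ring.
    eapply Rle_trans; [apply Rabs_triang|]. rewrite Rabs_Ropp. lra. }
  pose proof (Rabs_pos y). pose proof (Rabs_pos x). assert (0 <= s) by apply Rabs_pos.
  assert (0 <= a * (s ^ 2 - 5 * s + 7))
    by (pose proof (pow2_ge_0 (s - 5 / 2)); apply Rmult_le_pos; nra).
  rewrite Hs. nra.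
Qed.

Lemma Cmod_gauss_le k z : Cmod (gauss k z) <= gauss_envelope z * exp (- a * Rabs (IZR k)).
Proof.
  eapply Rle_trans; [|apply Cmod_gauss_mul_exp_le].
  rewrite <- (Rmult_1_r (Cmod (gauss k z))) at 1.
  apply Rmult_le_compat_l; [apply Cmod_ge_0|].
  rewrite <- exp_0. apply exp_le_exp. pose proof (Cmod_ge_0 (z - IZR k)). nra.
Qed.

Lemma Cmod_gauss_deriv_le k z :
  Cmod (gauss_deriv k z) <= gauss_envelope z * exp (- a * Rabs (IZR k)).
Proof.
  eapply Rle_trans; [|apply Cmod_gauss_mul_exp_le].
  unfold gauss_deriv. rewrite !Cmod_mult, !Cmod_R, Rabs_left, (Rabs_pos_eq 2) by lra.
  rewrite Rmult_comm. apply Rmult_le_compat_l; [apply Cmod_ge_0|].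
  pose proof (Cmod_ge_0 (z - IZR k)).
  pose proof (exp_ineq1_le (2 * (2 * a * Cmod (z - IZR k) + a))). nra.
Qed.

Lemma Cmod_gauss_remainder_le k z h : Cmod h <= 1 ->
  Cmod (gauss k (z + h) - gauss k z - h * gauss_deriv k z)
  <= ((16 + a) * Cmod h ^ 2 * gauss_envelope z) * exp (- a * Rabs (IZR k)).
Proof.
  intros Hh.
  set (u := (z - IZR k)%C).
  set (w := (RtoC (- a) * (RtoC 2 * u * h + h * h))%C).
  assert (Hid : (gauss k (z + h) - gauss k z - h * gauss_deriv k z
                 = gauss k z * ((cexp w - 1 - w) + RtoC (- a) * h * h))%C).
  { assert (Hshift : gauss k (z + h) = (gauss k z * cexp w)%C).
    { unfold gauss. rewrite <- cexp_add. f_equal. unfold gauss_exponent, w, u. ring. }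
    unfold gauss_deriv. rewrite Hshift. fold u. unfold w. ring. }
  rewrite Hid, Cmod_mult.
  pose proof (Cmod_gauss_mul_exp_le k z) as Hg. fold u in Hg.
  pose proof (Cmod_ge_0 u). pose proof (Cmod_ge_0 h) as Ht. pose proof (Cmod_ge_0 (gauss k z)).
  set (t := Cmod h) in *. set (r := 2 * a * Cmod u + a) in *.
  assert (Hr : 0 <= r) by (unfold r; nra).
  assert (Hw : Cmod w <= t * r).
  { unfold w. rewrite Cmod_mult, Cmod_R, Rabs_left, Ropp_involutive by lra.
    pose proof (Cmod_triangle (RtoC 2 * u * h) (h * h)) as Htri.
    rewrite !Cmod_mult, Cmod_R, Rabs_pos_eq in Htri by lra. fold t in Htri.
    assert (t * t <= t) by nra.
    apply (Rle_trans _ (a * (2 * Cmod u * t + t * t)));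
      [apply Rmult_le_compat_l; lra | unfold r; nra]. }
  pose proof (Cmod_cexp_sub_1_sub_le_of_le w t r (conj Ht Hh) Hr Hw) as Htaylor.
  assert (Hquad : Cmod (RtoC (- a) * h * h) <= a * t ^ 2 * exp (2 * r)).
  { rewrite !Cmod_mult, Cmod_R, Rabs_left, Ropp_involutive by lra. fold t.
    assert (1 <= exp (2 * r)) by (pose proof (exp_ineq1_le (2 * r)); lra).
    assert (0 <= a * t ^ 2) by (pose proof (pow2_ge_0 t); nra).
    nra. }
  pose proof (Cmod_triangle (cexp w - 1 - w) (RtoC (- a) * h * h)).
  apply (Rle_trans _ (Cmod (gauss k z) * ((16 + a) * t ^ 2 * exp (2 * r)))).
  - apply Rmult_le_compat_l; lra.
  - replace ((16 + a) * t ^ 2 * gauss_envelope z * exp (- a * Rabs (IZR k)))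
      with ((16 + a) * t ^ 2 * (gauss_envelope z * exp (- a * Rabs (IZR k)))) by ring.
    rewrite Rmult_comm, Rmult_assoc.
    apply Rmult_le_compat_l; [pose proof (pow2_ge_0 t); nra | lra].
Qed.

Lemma Cmod_gauss_le_shifted k x y :
  Cmod (gauss k (x, y)) <= exp (a * y ^ 2 + 2 * a) * exp (- a * Rabs (IZR (k - up x))).
Proof.
  rewrite Cmod_gauss, <- exp_plus. apply exp_le_exp.
  destruct (archimed x) as [Hup1 Hup2].
  rewrite minus_IZR.
  set (s := Rabs (x - IZR k)).
  assert (Hku : Rabs (IZR k - IZR (up x)) <= s + 1).
  { replace (IZR k - IZR (up x)) with (- (x - IZR k) + (x - IZR (up x))) by ring.
    eapply Rle_trans; [apply Rabs_triang|]. rewrite Rabs_Ropp.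
    assert (Rabs (x - IZR (up x)) <= 1) by (unfold Rabs; destruct Rcase_abs; lra). unfold s; lra. }
  assert (Hs : (x - IZR k) ^ 2 = s ^ 2) by (unfold s; rewrite pow2_abs; reflexivity).
  assert (0 <= a * (s ^ 2 - s + 1))
    by (pose proof (pow2_ge_0 (s - 1 / 2)); apply Rmult_le_pos; nra).
  rewrite Hs. nra.
Qed.

Variables (c : Z -> C) (L : R).
Hypothesis Hc : forall k : Z, Cmod (c k) <= L.

Definition gauss_term (z : C) (k : Z) : C := (c k * gauss k z)%C.

Definition gauss_term_deriv (z : C) (k : Z) : C := (c k * gauss_deriv k z)%C.

Definition gauss_sum (z : C) : C := Csum (sym_term (gauss_term z)).

Definition gauss_sum_deriv (z : C) : C := Csum (sym_term (gauss_term_deriv z)).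

Lemma Cmod_coef_mul_le k w B : Cmod w <= B -> Cmod (c k * w) <= L * B.
Proof. intros Hw. rewrite Cmod_mult. apply Rmult_le_compat; auto using Cmod_ge_0. Qed.

Lemma is_series_gauss_sum z : is_series (sym_term (gauss_term z)) (gauss_sum z).
Proof.
  apply is_series_Csum, (ex_series_sym_term a (L * gauss_envelope z)); [exact ha|].
  intros k. rewrite Rmult_assoc. apply Cmod_coef_mul_le, Cmod_gauss_le.
Qed.

Lemma is_series_gauss_sum_deriv z :
  is_series (sym_term (gauss_term_deriv z)) (gauss_sum_deriv z).
Proof.
  apply is_series_Csum, (ex_series_sym_term a (L * gauss_envelope z)); [exact ha|].
  intros k. rewrite Rmult_assoc. apply Cmod_coef_mul_le, Cmod_gauss_deriv_le.
Qed.

Lemma is_derive_gauss_sum z : is_derive gauss_sum z (gauss_sum_deriv z).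
Proof.
  apply (is_derive_of_quadratic_remainder _ _ _
           (2 * (L * ((16 + a) * gauss_envelope z)) / (1 - exp (- a)))).
  intros h Hh.
  set (rem := fun k => (c k * (gauss k (z + h) - gauss k z - h * gauss_deriv k z))%C).
  assert (Hrem : is_series (sym_term rem)
                   (gauss_sum (z + h) - gauss_sum z - h * gauss_sum_deriv z)%C).
  { apply (is_series_ext (fun n => plus (plus (sym_term (gauss_term (z + h)) n)
                                             (opp (sym_term (gauss_term z) n)))
                                       (opp (scal h (sym_term (gauss_term_deriv z) n))))).
    - intros [|n]; unfold sym_term, rem, gauss_term, gauss_term_deriv, plus, opp, scal; simpl;
        unfold mult; simpl; ring.
    - apply (is_series_minus (V := C_NormedModule));
        [apply (is_series_minus (V := C_NormedModule))
        | apply (is_series_scal_l (V := C_NormedModule))];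
        auto using is_series_gauss_sum, is_series_gauss_sum_deriv. }
  eapply Rle_trans.
  { apply (Cmod_le_of_is_series_sym_term a (L * ((16 + a) * Cmod h ^ 2 * gauss_envelope z))
             rem ha); [|exact Hrem].
    intros k. rewrite Rmult_assoc. apply Cmod_coef_mul_le, Cmod_gauss_remainder_le, Hh. }
  right. change (abs h) with (Cmod h). field. pose proof (exp_neg_lt_1 a ha). lra.
Qed.

Lemma gauss_series_value_gauss_sum x : gauss_series_value a c x (gauss_sum (RtoC x)).
Proof.
  unfold gauss_series_value.
  apply (filterlim_ext (sum_n (sym_term (gauss_term (RtoC x))))); [|apply is_series_gauss_sum].
  intros N. unfold gauss_partial. rewrite <- sum_centered_window.
  apply sum_n_m_ext. intros j. unfold gauss_term. rewrite gauss_RtoC. reflexivity.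
Qed.

Lemma Cmod_gauss_sum_le x y :
  Cmod (gauss_sum (x, y))
  <= exp (2 * a) * ((1 + exp (- a)) / (1 - exp (- a))) * L * exp (a * y ^ 2).
Proof.
  apply (norm_le_of_lim (V := C_NormedModule) _ _ _ _ (is_series_gauss_sum (x, y))
           (is_lim_seq_const _)).
  intros N. rewrite <- sum_centered_window.
  set (s := (- Z.of_nat N - up x)%Z).
  eapply Rle_trans; [apply (norm_sum_n_m (V := C_NormedModule))|].
  eapply Rle_trans.
  { apply (sum_n_m_le _ (fun j : nat => L * exp (a * y ^ 2 + 2 * a)
                                       * exp (- a * Rabs (IZR (Z.of_nat j + s))))).
    intros j. rewrite Rmult_assoc. apply Cmod_coef_mul_le.
    replace (Z.of_nat j + s)%Z with ((Z.of_nat j - Z.of_nat N) - up x)%Z by (unfold s; lia).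
    apply Cmod_gauss_le_shifted. }
  rewrite (sum_n_m_mult_l (K := R_Ring)).
  replace (exp (2 * a) * ((1 + exp (- a)) / (1 - exp (- a))) * L * exp (a * y ^ 2))
    with (L * exp (a * y ^ 2 + 2 * a) * ((1 + exp (- a)) / (1 - exp (- a))))
    by (rewrite exp_plus; ring).
  apply Rmult_le_compat_l; [| exact (sum_window_laplace_le a ha (2 * N) s)].
  pose proof (Hc 0%Z). pose proof (Cmod_ge_0 (c 0%Z)). pose proof (exp_pos (a * y ^ 2 + 2 * a)).
  nra.
Qed.

End Gaussian.

Lemma Cmod_le_linf_norm c : linf_bounded c -> forall k, Cmod (c k) <= linf_norm c.
Proof.
  intros [M HM] k. unfold linf_norm.
  destruct (Lub_Rbar_correct (fun r => exists k : Z, r = Cmod (c k))) as [Hub Hleast].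
  destruct (Lub_Rbar (fun r => exists k : Z, r = Cmod (c k))) as [r | |].
  - exact (Hub _ (ex_intro _ k eq_refl)).
  - exfalso. apply (Hleast (Finite M)). intros r [j ->]. apply HM.
  - destruct (Hub _ (ex_intro _ k eq_refl)).
Qed.

Theorem lemma4p1 (a : R) (ha : 0 < a) :
  exists Cst : R, 0 < Cst /\
    forall c : Z -> C, linf_bounded c ->
      exists F : C -> C,
        entire F /\
        (forall x : R, gauss_series_value a c x (F (RtoC x))) /\
        (forall x y : R, Cmod (F (x, y)) <= Cst * linf_norm c * exp (a * y ^ 2)).
Proof.
  exists (exp (2 * a) * ((1 + exp (- a)) / (1 - exp (- a)))). split.
  { pose proof (exp_neg_lt_1 a ha). pose proof (exp_pos (- a)).
    apply Rmult_lt_0_compat; [apply exp_pos | apply Rdiv_lt_0_compat; lra]. }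
  intros c Hc.
  pose proof (Cmod_le_linf_norm c Hc) as HL.
  exists (gauss_sum a c). split; [|split].
  - intros z. exists (gauss_sum_deriv a c z). exact (is_derive_gauss_sum a ha c _ HL z).
  - exact (gauss_series_value_gauss_sum a ha c _ HL).
  - intros x y. exact (Cmod_gauss_sum_le a ha c _ HL x y).
Qed.
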